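(* Let $m\ge1$ and let $\pi\in\mathfrak{S}_{3m}$ avoid $132$ and consist only of $3$-cycles, with element sets $\{a_i<b_i<c_i\}$, $i=1,\dots,m$, indexed so that $b_1<\dots<b_m$. Let $A=\{a_i\}$, $B=\{b_i\}$, let $D_\pi$ be the associated Dyck word and $X=(x_1,\dots,x_k)$ its free composition. Write $A=\bigcup_{j=1}^k A_j$ and $B=\bigcup_{j=1}^k B_j$, where the $A_j$ are consecutive (in the increasing order of $A$) subsets with every element of $A_j$ less than every element of $A_{j+1}$ and $|A_j|=x_{k-j+1}$, and the $B_j$ are consecutive subsets with every element of $B_j$ less than every element of $B_{j+1}$ and $|B_j|=x_j$. Then for every $i$ and $j$, if $b_i\in B_j$ then $a_i\in A_{k-j+1}$.
   Context: A permutation avoids $132$ if there are no indices $i<j<k$ with $\pi_i<\pi_k<\pi_j$. With $C=\{c_i\}$, the associated Dyck word $D_\pi$ is the word of length $2m$ obtained by listing the elements of $B\cup C$ in increasing order and writing $0$ for each element of $B$ and $1$ for each element of $C$. For a Dyck word $D$ of semilength $m$: indices $i,i+1$ are linked if the $i$-th and $(i+1)$-st $0$ of $D$ occupy adjacent positions and the $i$-th and $(i+1)$-st $1$ occupy adjacent positions; the free blocks are the maximal intervals of $\{1,\dots,m\}$ in which all consecutive indices are linked; the free composition $(x_1,\dots,x_k)$ lists the sizes of the free blocks from left to right. *)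

From mathcomp Require Import all_boot all_order all_fingroup.
Set Implicit Arguments. Unset Strict Implicit. Unset Printing Implicit Defensive.

(* One-line notation: pi_i = pi i, positions 'I_n = {0,...,n-1}
   (shift of {1,...,n}; pattern avoidance is shift invariant). *)
Definition avoids132 (n : nat) (p : {perm 'I_n}) : Prop :=
  forall i j k : 'I_n, i < j -> j < k -> ~ (p i < p k /\ p k < p j).

Definition only3cycles (n : nat) (p : {perm 'I_n}) : Prop :=
  forall x : 'I_n, #|porbit p x| = 3.

Definition Aset (n : nat) (p : {perm 'I_n}) : {set 'I_n} :=
  [set x | [forall y in porbit p x, x <= y]].
Definition Bset (n : nat) (p : {perm 'I_n}) : {set 'I_n} :=
  [set x | [exists y in porbit p x, y < x] && [exists z in porbit p x, x < z]].
Definition Cset (n : nat) (p : {perm 'I_n}) : {set 'I_n} :=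
  [set x | [forall y in porbit p x, y <= x]].

Definition sorted_elems (n : nat) (S : {set 'I_n}) : seq 'I_n :=
  [seq x <- enum 'I_n | x \in S].

(* Dyck word D_pi: elements of B u C in increasing order, 0 (false) for B,
   1 (true) for C *)
Definition dyck_word (n : nat) (p : {perm 'I_n}) : seq bool :=
  [seq (x \in Cset p) | x <- sorted_elems (Bset p :|: Cset p)].

Definition semilength (D : seq bool) : nat := count negb D.

Definition zeros_pos (D : seq bool) : seq nat :=
  [seq q <- iota 0 (size D) | ~~ nth false D q].
Definition ones_pos (D : seq bool) : seq nat :=
  [seq q <- iota 0 (size D) | nth false D q].

(* linked D i : indices i+1, i+2 (1-based) are linked, i.e. the (i+1)-st and
   (i+2)-nd 0 occupy adjacent positions and the (i+1)-st and (i+2)-nd 1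
   occupy adjacent positions *)
Definition linked (D : seq bool) (i : nat) : bool :=
  (nth 0 (zeros_pos D) i.+1 == (nth 0 (zeros_pos D) i).+1) &&
  (nth 0 (ones_pos D) i.+1 == (nth 0 (ones_pos D) i).+1).

(* sizes of maximal runs: given the link bits between consecutive indices
   1..m, cut between i and i+1 exactly when they are not linked *)
Fixpoint comp_of (l : seq bool) (cur : nat) : seq nat :=
  match l with
  | [::] => [:: cur]
  | b :: l' => if b then comp_of l' cur.+1 else cur :: comp_of l' 1
  end.

Definition free_comp (D : seq bool) : seq nat :=
  comp_of [seq linked D i | i <- iota 0 (semilength D).-1] 1.

(* j-th (0-based) consecutive block of s when cut according to sizes X *)
Definition block (T : Type) (s : seq T) (X : seq nat) (j : nat) : seq T :=
  take (nth 0 X j) (drop (sumn (take j X)) s).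

From mathcomp Require Import all_boot all_order all_fingroup.
From mathcomp Require Import zify.
Set Implicit Arguments. Unset Strict Implicit. Unset Printing Implicit Defensive.

(* Every 3-cycle {a < b < c} of p is determined by its middle element b in B,
   with a = alpha b and c = gamma b.  Avoiding 132 makes gamma increasing on B, so
   the i-th 1 of the Dyck word is the largest element of the cycle of the i-th 0.
   The heart of the proof: if b < b' in B and alpha b < alpha b', then no element of
   C lies between b and b' and no element of B lies between gamma b and gamma b', so
   every index between the ranks of b and b' is linked and b, b' lie in the same free
   block.  Hence alpha reverses the order of the free blocks, and counting the
   elements of B in the blocks before and after that of b pins the rank of alpha b
   in A down to the mirror block. *)

Lemma mem_take_drop (T : eqType) (s : seq T) y x d : uniq s ->
  (y \in take x (drop d s)) = (y \in s) && (d <= index y s < d + x).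
Proof.
move=> s_uniq; apply/idP/idP.
- move=> /(nthP y) [i]; rewrite size_take size_drop => i_lt.
  rewrite nth_take; last by move: i_lt; case: ifP; lia.
  rewrite nth_drop => <-; rewrite mem_nth ?index_uniq //; move: i_lt; case: ifP; lia.
- move=> /andP [ys /andP [d_le lt_dx]].
  have -> : y = nth y (take x (drop d s)) (index y s - d).
    by rewrite nth_take ?nth_drop ?subnKC ?nth_index //; lia.
  apply: mem_nth; rewrite size_take size_drop; have := index_mem y s.
  rewrite ys; case: ifP; lia.
Qed.

Lemma sumn_take_le (X : seq nat) j : sumn (take j X) <= sumn X.
Proof. by rewrite -{2}(cat_take_drop j X) sumn_cat leq_addr. Qed.

Lemma sumn_take_rev (X : seq nat) j : j <= size X ->
  sumn (take (size X - j) (rev X)) = sumn X - sumn (take j X).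
Proof.
move=> j_le; rewrite take_rev subKn // sumn_rev.
by rewrite -{2}(cat_take_drop j X) sumn_cat addKn.
Qed.

Section SortedElems.
Variable n : nat.
Implicit Types (S T : {set 'I_n}) (x y z : 'I_n).

Definition rank S y := #|[set z in S | z < y]|.

Lemma mem_sorted_elems S x : (x \in sorted_elems S) = (x \in S).
Proof. by rewrite mem_filter mem_enum andbT. Qed.

Lemma uniq_sorted_elems S : uniq (sorted_elems S).
Proof. exact/filter_uniq/enum_uniq. Qed.

Lemma size_sorted_elems S : size (sorted_elems S) = #|S|.
Proof.
rewrite -(card_uniqP (uniq_sorted_elems S)).
by apply: eq_card => x; rewrite mem_sorted_elems.
Qed.

Lemma ltn_val_trans : transitive (relpre (@nat_of_ord n) ltn).
Proof. by move=> y x z; exact: ltn_trans. Qed.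

Lemma sorted_sorted_elems S : sorted (relpre val ltn) (sorted_elems S).
Proof.
apply: sorted_filter; first exact: ltn_val_trans.
by rewrite -sorted_map val_enum_ord iota_ltn_sorted.
Qed.

Lemma filter_sorted_elems S (P : pred 'I_n) :
  filter P (sorted_elems S) = sorted_elems [set x in S | P x].
Proof. by rewrite -filter_predI; apply: eq_filter => x; rewrite !inE andbC. Qed.

Lemma ltn_rank S y1 y2 : y1 \in S -> y2 \in S -> (rank S y1 < rank S y2) = (y1 < y2).
Proof.
move=> y1S y2S; apply/idP/idP => [|lt12].
  apply: contraLR; rewrite -!leqNgt => le21; apply/subset_leq_card/subsetP => z.
  by rewrite !inE => /andP [-> /leq_trans->].
have <- : #|y1 |: [set z in S | z < y1]| = (rank S y1).+1.
  by rewrite cardsU1 !inE ltnn andbF.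
apply/subset_leq_card/subsetP => z.
by rewrite !inE => /orP [/eqP-> | /andP [-> /ltn_trans->]]; rewrite ?y1S.
Qed.

Lemma index_sorted_elems S y : y \in S -> index y (sorted_elems S) = rank S y.
Proof.
move=> yS; set s := sorted_elems S.
have ys : y \in s by rewrite mem_sorted_elems.
have index_lt z : z \in S -> (index z s < index y s) = (z < y).
  move=> zS; have zs : z \in s by rewrite mem_sorted_elems.
  have ltn_index := sorted_ltn_index ltn_val_trans (sorted_sorted_elems S).
  apply/idP/idP => [|lt_zy]; first exact: ltn_index.
  case: ltngtP => // [/(ltn_index y z ys zs) /= lt_yz|/(congr1 (nth y s))].
    by rewrite ltnNge ltnW in lt_zy.
  by rewrite !nth_index // => eq_zy; rewrite eq_zy ltnn in lt_zy.
rewrite -[LHS](size_takel (index_size y s)).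
rewrite -(card_uniqP (take_uniq _ (uniq_sorted_elems S))).
apply: eq_card => z; rewrite inE in_take_leq ?index_size //.
case zS : (z \in S); first exact: index_lt.
rewrite memNindex ?mem_sorted_elems ?zS // ltnNge.
by rewrite ltnW // index_mem.
Qed.

Lemma rank_lt_card S y : y \in S -> rank S y < #|S|.
Proof.
by move=> yS; rewrite -index_sorted_elems // -size_sorted_elems index_mem mem_sorted_elems.
Qed.

Lemma mem_nth_sorted_elems S x0 t : t < #|S| -> nth x0 (sorted_elems S) t \in S.
Proof. by move=> t_lt; rewrite -mem_sorted_elems mem_nth ?size_sorted_elems. Qed.

Lemma rank_nth_sorted_elems S x0 t : t < #|S| -> rank S (nth x0 (sorted_elems S) t) = t.
Proof.
move=> t_lt; rewrite -index_sorted_elems ?mem_nth_sorted_elems //.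
by rewrite index_uniq ?uniq_sorted_elems ?size_sorted_elems.
Qed.

Lemma nth_rank S x0 y : y \in S -> nth x0 (sorted_elems S) (rank S y) = y.
Proof. by move=> yS; rewrite -index_sorted_elems // nth_index ?mem_sorted_elems. Qed.

Lemma card_rank_lt S t : #|[set y in S | rank S y < t]| = minn t #|S|.
Proof.
rewrite -(size_sorted_elems S) -size_take_min.
rewrite -(card_uniqP (take_uniq _ (uniq_sorted_elems S))).
apply: eq_card => y; rewrite inE; case yS : (y \in S) => /=.
  by rewrite in_take ?mem_sorted_elems ?index_sorted_elems.
by apply/esym/negP => /mem_take; rewrite mem_sorted_elems yS.
Qed.

Lemma card_rank_ge S t : #|[set y in S | t <= rank S y]| = #|S| - t.
Proof.
have -> : [set y in S | t <= rank S y] = S :\: [set y in S | rank S y < t].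
  by apply/setP => y; rewrite !inE leqNgt; case: (y \in S); rewrite /= ?andbT.
rewrite cardsD (setIidPr _) ?card_rank_lt; first lia.
by apply/subsetP => y; rewrite inE => /andP [].
Qed.

Lemma card_gt_rank S y : y \in S -> #|[set z in S | y < z]| = #|S| - (rank S y).+1.
Proof.
move=> yS; rewrite -card_rank_ge; apply: eq_card => z; rewrite !inE.
by case zS : (z \in S); rewrite //= ltn_rank.
Qed.

Lemma rank_succ S y y' : y \in S -> y < y' ->
  (forall z, z \in S -> ~~ (y < z < y')) -> rank S y' = (rank S y).+1.
Proof.
move=> yS lt_yy' between; rewrite /rank.
have -> : [set z in S | z < y'] = y |: [set z in S | z < y].
  apply/setP => z; rewrite !inE; case: (eqVneq z y) => [-> | neq_zy] /=.
    by rewrite yS lt_yy'.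
  case zS : (z \in S) => //=; case: (ltngtP z y) => [lt_zy | lt_yz | /val_inj eq_zy].
  - exact: ltn_trans lt_yy'.
  - by apply/negbTE; have := between z zS; rewrite lt_yz.
  - by rewrite eq_zy eqxx in neq_zy.
by rewrite cardsU1 !inE ltnn andbF.
Qed.

Lemma rank_nth_succ S T x0 t : S \subset T -> t.+1 < #|S| ->
    (forall z, z \in T -> z \notin S ->
      ~~ (nth x0 (sorted_elems S) t < z < nth x0 (sorted_elems S) t.+1)) ->
  rank T (nth x0 (sorted_elems S) t.+1) = (rank T (nth x0 (sorted_elems S) t)).+1.
Proof.
move=> /subsetP sST lt_tS between; set u := nth x0 _ t; set u' := nth x0 _ t.+1.
have uS : u \in S by rewrite mem_nth_sorted_elems // ltnW.
have u'S : u' \in S by rewrite mem_nth_sorted_elems.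
have ru : rank S u = t by rewrite rank_nth_sorted_elems // ltnW.
have ru' : rank S u' = t.+1 by rewrite rank_nth_sorted_elems.
apply: rank_succ => [||z zT]; first exact: sST.
  by rewrite -(ltn_rank uS u'S) ru ru'.
have [zS | zS] := boolP (z \in S); last exact: between.
by rewrite -(ltn_rank uS zS) -(ltn_rank zS u'S) ru ru'; apply/negP => /andP[]; lia.
Qed.

Lemma mem_block_sorted_elems S X j y : j < size X ->
  (y \in block (sorted_elems S) X j) =
  (y \in S) && (sumn (take j X) <= rank S y < sumn (take j.+1 X)).
Proof.
move=> j_lt; rewrite /block mem_take_drop ?uniq_sorted_elems // mem_sorted_elems.
rewrite (take_nth 0 j_lt) -cats1 sumn_cat /= addn0.
by case yS : (y \in S) => /=; rewrite ?index_sorted_elems.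
Qed.

Lemma mem_block_rev_sorted_elems S X j y : j < size X ->
  (y \in block (sorted_elems S) (rev X) (size X - j.+1)) =
  (y \in S) && (sumn X - sumn (take j.+1 X) <= rank S y < sumn X - sumn (take j X)).
Proof.
move=> j_lt; rewrite /block mem_take_drop ?uniq_sorted_elems // mem_sorted_elems.
rewrite sumn_take_rev // nth_rev; last lia.
have -> : size X - (size X - j.+1).+1 = j by lia.
have := sumn_take_le X j.+1; rewrite (take_nth 0 j_lt) -cats1 sumn_cat /= addn0.
by case yS : (y \in S) => /=; rewrite ?index_sorted_elems // => le_sum; congr (_ && _); lia.
Qed.

End SortedElems.

Lemma zeros_pos_negb D : zeros_pos D = ones_pos (map negb D).
Proof.
rewrite /zeros_pos /ones_pos size_map; apply: eq_in_filter => q.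
by rewrite mem_iota => /andP [_ q_lt]; rewrite (nth_map false).
Qed.

Lemma nth_ones_pos_map (T : eqType) (s : seq T) (P : pred T) x0 t :
  uniq s -> t < count P s ->
  nth 0 (ones_pos (map P s)) t = index (nth x0 (filter P s) t) s.
Proof.
move=> s_uniq t_lt.
have map_ones : map (nth x0 s) (ones_pos (map P s)) = filter P s.
  rewrite -[in RHS](mkseq_nth x0 s) /mkseq filter_map /ones_pos size_map.
  congr map; apply: eq_in_filter => q; rewrite mem_iota => /andP [_ q_lt].
  by rewrite (nth_map x0).
have t_lt' : t < size (ones_pos (map P s)) by rewrite -(size_map (nth x0 s)) map_ones size_filter.
rewrite -map_ones (nth_map 0) // index_uniq //.
have : nth 0 (ones_pos (map P s)) t \in ones_pos (map P s) by rewrite mem_nth.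
by rewrite mem_filter mem_iota size_map => /andP [_ /andP [_ ->]].
Qed.

Section TwoColourWord.
Variables (n : nat) (B C : {set 'I_n}).
Hypothesis BC : [disjoint B & C].

Local Notation word := [seq x \in C | x <- sorted_elems (B :|: C)].

Lemma filter_word_Bset : filter (predC (mem C)) (sorted_elems (B :|: C)) = sorted_elems B.
Proof.
rewrite filter_sorted_elems; congr sorted_elems; apply/setP => x; rewrite !inE.
by case xB : (x \in B); rewrite ?(disjointFr BC xB) //= andbN.
Qed.

Lemma filter_word_Cset : filter (mem C) (sorted_elems (B :|: C)) = sorted_elems C.
Proof.
rewrite filter_sorted_elems; congr sorted_elems; apply/setP => x; rewrite !inE.
by case: (x \in C); rewrite ?orbT ?andbT ?andbF.
Qed.

Lemma semilength_word : semilength word = #|B|.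
Proof. by rewrite /semilength count_map -size_filter filter_word_Bset size_sorted_elems. Qed.

Lemma nth_zeros_pos_word x0 t : t < #|B| ->
  nth 0 (zeros_pos word) t = rank (B :|: C) (nth x0 (sorted_elems B) t).
Proof.
move=> t_lt; rewrite zeros_pos_negb -map_comp (@nth_ones_pos_map _ _ _ x0).
- by rewrite filter_word_Bset index_sorted_elems // inE mem_nth_sorted_elems.
- exact: uniq_sorted_elems.
by rewrite -size_filter filter_word_Bset size_sorted_elems.
Qed.

Lemma nth_ones_pos_word x0 t : t < #|C| ->
  nth 0 (ones_pos word) t = rank (B :|: C) (nth x0 (sorted_elems C) t).
Proof.
move=> t_lt; rewrite (@nth_ones_pos_map _ _ _ x0).
- by rewrite filter_word_Cset index_sorted_elems // inE mem_nth_sorted_elems ?orbT.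
- exact: uniq_sorted_elems.
by rewrite -size_filter filter_word_Cset size_sorted_elems.
Qed.

Lemma linked_word x0 t : t.+1 < #|B| -> t.+1 < #|C| ->
    (forall z, z \in C ->
      ~~ (nth x0 (sorted_elems B) t < z < nth x0 (sorted_elems B) t.+1)) ->
    (forall z, z \in B ->
      ~~ (nth x0 (sorted_elems C) t < z < nth x0 (sorted_elems C) t.+1)) ->
  linked word t.
Proof.
move=> ltB ltC noC noB; rewrite /linked.
rewrite !(nth_zeros_pos_word x0) ?(nth_ones_pos_word x0) ?(ltnW ltB) ?(ltnW ltC) //.
rewrite !rank_nth_succ ?subsetUl ?subsetUr ?eqxx //.
- by move=> z; rewrite inE => /orP [zB _ | zC /negP //]; exact: noB.
- by move=> z; rewrite inE => /orP [zB /negP // | zC _]; exact: noC.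
Qed.

End TwoColourWord.

Lemma sumn_comp_of l cur : sumn (comp_of l cur) = size l + cur.
Proof. by elim: l cur => [|[] l IH] cur /=; rewrite ?IH; lia. Qed.

Lemma comp_of_cut l cur j : 0 < j < size (comp_of l cur) ->
  cur <= sumn (take j (comp_of l cur)) /\
  nth true l (sumn (take j (comp_of l cur)) - cur) = false.
Proof.
elim: l cur j => [|[] l IH] cur j /=; first by case: j => [|[]].
  move=> /(IH cur.+1) [le_cur cut]; split; first lia.
  by rewrite -cut; have -> : forall s, cur.+1 <= s -> s - cur = (s - cur.+1).+1 by lia.
case: j => [|[|j]] //= j_lt; first by rewrite take0 addn0 subnn.
have [le_1 cut] := IH 1 j.+1 j_lt; split; first lia.
by rewrite -cut; have -> : forall s, 1 <= s -> cur + s - cur = (s - 1).+1 by lia.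
Qed.

Lemma sumn_free_comp D : 0 < semilength D -> sumn (free_comp D) = semilength D.
Proof. by rewrite sumn_comp_of size_map size_iota; lia. Qed.

Lemma free_comp_cut D j : 0 < j < size (free_comp D) ->
  ~~ linked D (sumn (take j (free_comp D))).-1.
Proof.
move=> j_lt; have [_] := comp_of_cut j_lt; rewrite -/(free_comp D) subn1.
set t := (sumn _).-1; have [t_lt | t_ge] := ltnP t (semilength D).-1.
  by rewrite (nth_map 0) ?size_iota // nth_iota // => ->.
by rewrite nth_default // size_map size_iota.
Qed.

Lemma set3P (T : finType) (x a b c : T) :
  reflect [\/ x = a, x = b | x = c] (x \in [set a; b; c]).
Proof.
rewrite !inE -orbA; apply: (iffP or3P) => [[] /eqP | [] ->];
  by [constructor 1 | constructor 2 | constructor 3 |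
      exact: Or31 (eqxx _) | exact: Or32 (eqxx _) | exact: Or33 (eqxx _)].
Qed.

Definition is_cycle3 n (p : {perm 'I_n}) (a b c : 'I_n) : Prop :=
  [/\ a < b, b < c & (p a = b /\ p b = c /\ p c = a) \/ (p a = c /\ p c = b /\ p b = a)].

Section CycleSets.
Variables (n : nat) (p : {perm 'I_n}) (a b c x : 'I_n).
Hypotheses (ab : a < b) (bc : b < c) (orbit_x : porbit p x = [set a; b; c]).

Let x_abc : [\/ x = a, x = b | x = c].
Proof. by apply/set3P; rewrite -orbit_x porbit_id. Qed.

Lemma mem_Aset_porbit : (x \in Aset p) = (x == a).
Proof.
rewrite inE orbit_x; apply/forall_inP/eqP => [/(_ a) | -> y /set3P[] ->]; try lia.
by rewrite !inE eqxx => /(_ isT); case: x_abc => -> le; apply/val_inj; lia.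
Qed.

Lemma mem_Cset_porbit : (x \in Cset p) = (x == c).
Proof.
rewrite inE orbit_x; apply/forall_inP/eqP => [/(_ c) | -> y /set3P[] ->]; try lia.
by rewrite !inE eqxx ?orbT => /(_ isT); case: x_abc => -> le; apply/val_inj; lia.
Qed.

Lemma mem_Bset_porbit : (x \in Bset p) = (x == b).
Proof.
rewrite inE orbit_x; apply/andP/eqP => [[/exists_inP [y /set3P y_abc lt_yx]
  /exists_inP [z /set3P z_abc lt_xz]] | ->].
  by move: lt_yx lt_xz; case: x_abc y_abc z_abc => -> [] -> [] -> *; apply/val_inj; lia.
by split; apply/exists_inP; [exists a | exists c]; rewrite // !inE eqxx ?orbT.
Qed.

End CycleSets.

Lemma porbit_of_mem (T : finType) (s : {perm T}) x y :
  x \in porbit s y -> porbit s x = porbit s y.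
Proof. by move=> xy; apply/eqP; rewrite eq_porbit_mem. Qed.

Section ThreeCycles.
Variables (n : nat) (p : {perm 'I_n}).
Hypothesis p3 : only3cycles p.

Lemma porbit_cycle3 x : exists a b c, is_cycle3 p a b c /\ porbit p x = [set a; b; c].
Proof.
have [a a_x min_a] : exists2 a, a \in porbit p x & forall y, y \in porbit p x -> a <= y.
  by case: (arg_minnP val (porbit_id p x)) => a; exists a.
rewrite -(porbit_of_mem a_x) in min_a *.
have := uniq_traject_porbit p a; have := porbit_traject p a; have := iter_porbit p a.
rewrite p3 /= !inE !negb_or andbT => ppp_a orbit_a /andP [/andP [a_pa a_ppa] pa_ppa].
have lt_a y : y \in porbit p a -> a != y -> a < y.
  by move=> y_a neq_ay; rewrite ltn_neqAle val_eqE neq_ay min_a.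
have lt_pa : a < p a by apply: lt_a a_pa; rewrite orbit_a !inE eqxx orbT.
have lt_ppa : a < p (p a) by apply: lt_a a_ppa; rewrite orbit_a !inE eqxx !orbT.
case: (ltngtP (p a) (p (p a))) => [lt_pa_ppa | lt_ppa_pa | /val_inj eq_pa].
- exists a, (p a), (p (p a)); split; first by split; [| | left].
  by apply/setP => z; rewrite orbit_a !inE orbA.
- exists a, (p (p a)), (p a); split; first by split; [| | right].
  by apply/setP => z; rewrite orbit_a !inE orbA orbAC.
- by case/eqP: pa_ppa.
Qed.

Definition alpha (y : 'I_n) : 'I_n := if p y < y then p y else (p^-1)%g y.
Definition gamma (y : 'I_n) : 'I_n := if p y < y then (p^-1)%g y else p y.

Lemma cycle3_alpha_gamma a b c : is_cycle3 p a b c -> alpha b = a /\ gamma b = c.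
Proof.
case=> ab bc [[pa [pb _]] | [_ [pc pb]]]; rewrite /alpha /gamma pb.
  by rewrite ltnNge (ltnW bc) -pa permK.
by rewrite ab -pc permK.
Qed.

Lemma Bset_cycle3 y : y \in Bset p ->
  is_cycle3 p (alpha y) y (gamma y) /\ porbit p y = [set alpha y; y; gamma y].
Proof.
have [a [b [c [[ab bc] cyc] orbit_y]]] := porbit_cycle3 y.
rewrite (mem_Bset_porbit ab bc orbit_y) => /eqP eq_yb; subst y.
by have [-> ->] := cycle3_alpha_gamma (And3 ab bc cyc).
Qed.

Lemma alpha_porbit y : y \in Bset p -> alpha y \in porbit p y.
Proof. by move=> yB; have [_ ->] := Bset_cycle3 yB; rewrite !inE eqxx. Qed.

Lemma gamma_porbit y : y \in Bset p -> gamma y \in porbit p y.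
Proof. by move=> yB; have [_ ->] := Bset_cycle3 yB; rewrite !inE eqxx ?orbT. Qed.

Lemma alpha_Aset y : y \in Bset p -> alpha y \in Aset p.
Proof.
move=> yB; have [[ab bc _] orbit_y] := Bset_cycle3 yB.
by rewrite (mem_Aset_porbit ab bc (etrans (porbit_of_mem (alpha_porbit yB)) orbit_y)).
Qed.

Lemma gamma_Cset y : y \in Bset p -> gamma y \in Cset p.
Proof.
move=> yB; have [[ab bc _] orbit_y] := Bset_cycle3 yB.
by rewrite (mem_Cset_porbit ab bc (etrans (porbit_of_mem (gamma_porbit yB)) orbit_y)).
Qed.

Lemma porbit_Bset_inj y1 y2 x : y1 \in Bset p -> y2 \in Bset p ->
  x \in porbit p y1 -> x \in porbit p y2 -> y1 = y2.
Proof.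
move=> y1B y2B x_y1 x_y2; have [[ab bc _] orbit_y1] := Bset_cycle3 y1B.
rewrite -(porbit_of_mem x_y1) (porbit_of_mem x_y2) in orbit_y1.
by move: y2B; rewrite (mem_Bset_porbit ab bc orbit_y1) => /eqP.
Qed.

Lemma alpha_inj : {in Bset p &, injective alpha}.
Proof.
move=> y1 y2 y1B y2B eq_alpha; apply: (porbit_Bset_inj y1B y2B (alpha_porbit y1B)).
by rewrite eq_alpha alpha_porbit.
Qed.

Lemma gamma_inj : {in Bset p &, injective gamma}.
Proof.
move=> y1 y2 y1B y2B eq_gamma; apply: (porbit_Bset_inj y1B y2B (gamma_porbit y1B)).
by rewrite eq_gamma gamma_porbit.
Qed.

Lemma Bset_cycles_disjoint y1 y2 : y1 \in Bset p -> y2 \in Bset p -> y1 != y2 ->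
  [disjoint [set alpha y1; y1; gamma y1] & [set alpha y2; y2; gamma y2]].
Proof.
move=> y1B y2B; have [_ <-] := Bset_cycle3 y1B; have [_ <-] := Bset_cycle3 y2B.
apply: contraNT => /pred0Pn [x /andP [x_y1 x_y2]].
by rewrite (porbit_Bset_inj y1B y2B x_y1 x_y2).
Qed.

Lemma cycle3_Bset a b c x : is_cycle3 p a b c -> porbit p x = [set a; b; c] ->
  b \in Bset p.
Proof.
move=> [ab bc _] orbit_x; have b_x : b \in porbit p x by rewrite orbit_x !inE eqxx orbT.
by rewrite (mem_Bset_porbit ab bc (etrans (porbit_of_mem b_x) orbit_x)).
Qed.

Lemma Aset_alpha : Aset p = alpha @: Bset p.
Proof.
apply/setP => z; apply/idP/imsetP => [zA | [y yB ->]]; last exact: alpha_Aset.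
have [a [b [c [cyc orbit_z]]]] := porbit_cycle3 z; have [ab bc _] := cyc.
move: zA; rewrite (mem_Aset_porbit ab bc orbit_z) => /eqP->.
by exists b; [exact: cycle3_Bset orbit_z | have [] := cycle3_alpha_gamma cyc].
Qed.

Lemma Cset_gamma : Cset p = gamma @: Bset p.
Proof.
apply/setP => z; apply/idP/imsetP => [zC | [y yB ->]]; last exact: gamma_Cset.
have [a [b [c [cyc orbit_z]]]] := porbit_cycle3 z; have [ab bc _] := cyc.
move: zC; rewrite (mem_Cset_porbit ab bc orbit_z) => /eqP->.
by exists b; [exact: cycle3_Bset orbit_z | have [] := cycle3_alpha_gamma cyc].
Qed.

Lemma card_Aset : #|Aset p| = #|Bset p|.
Proof. by rewrite Aset_alpha card_in_imset //; exact: alpha_inj. Qed.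

Lemma card_Cset : #|Cset p| = #|Bset p|.
Proof. by rewrite Cset_gamma card_in_imset //; exact: gamma_inj. Qed.

Lemma disjoint_Bset_Cset : [disjoint Bset p & Cset p].
Proof.
apply/pred0P => x /=; have [a [b [c [[ab bc _] orbit_x]]]] := porbit_cycle3 x.
rewrite (mem_Bset_porbit ab bc orbit_x) (mem_Cset_porbit ab bc orbit_x).
by apply/negbTE/andP => -[/eqP -> /eqP eq_bc]; move: bc; rewrite eq_bc ltnn.
Qed.

Lemma porbit_Bset_alpha (a b c : 'I_n) : a < b -> b < c -> porbit p a = [set a; b; c] ->
  b \in Bset p /\ alpha b = a.
Proof.
move=> ab bc orbit_a; have b_a : b \in porbit p a by rewrite orbit_a !inE eqxx orbT.
have orbit_b := etrans (porbit_of_mem b_a) orbit_a.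
have bB : b \in Bset p by rewrite (mem_Bset_porbit ab bc orbit_b).
have orbit_alpha := etrans (porbit_of_mem (alpha_porbit bB)) orbit_b.
by split => //; apply/eqP; rewrite -(mem_Aset_porbit ab bc orbit_alpha) alpha_Aset.
Qed.

End ThreeCycles.

Lemma avoids132_at n (p : {perm 'I_n}) (i j k vi vj vk : 'I_n) : avoids132 p ->
  p i = vi -> p j = vj -> p k = vk -> i < j -> j < k -> vi < vk -> vk < vj -> False.
Proof. by move=> avoid <- <- <- ij jk ik kj; exact: avoid ij jk (conj ik kj). Qed.

(* [by_132] proves facts about a few disjoint 3-cycles of a 132-avoiding permutation
   by splitting on the relative order of their points until, in every branch, three
   of them form a 132 pattern; coincidences are excluded by disjointness. *)
Ltac saturate_lt :=
  repeat match goal with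
  | h1 : is_true (nat_of_ord ?x < nat_of_ord ?y),
    h2 : is_true (nat_of_ord ?y < nat_of_ord ?z) |- _ =>
      lazymatch goal with
      | _ : is_true (nat_of_ord x < nat_of_ord z) |- _ => fail
      | _ => have := ltn_trans h1 h2; move=> ?
      end
  end.

Ltac find_132 :=
  match goal with
  | avoid : avoids132 ?p |- _ =>
    match goal with
    | Ei : fun_of_perm p ?i = ?vi, Ej : fun_of_perm p ?j = ?vj,
      Ek : fun_of_perm p ?k = ?vk,
      ij : is_true (nat_of_ord ?i < nat_of_ord ?j),
      jk : is_true (nat_of_ord ?j < nat_of_ord ?k),
      ik : is_true (nat_of_ord ?vi < nat_of_ord ?vk),
      kj : is_true (nat_of_ord ?vk < nat_of_ord ?vj) |- _ =>
      exact: avoids132_at avoid Ei Ej Ek ij jk ik kj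
    end
  end.

Ltac close_coincidence :=
  match goal with
  | e : nat_of_ord ?x = nat_of_ord ?y |- _ =>
    move/val_inj: e => e;
    match goal with
    | D : is_true [disjoint _ & _] |- _ =>
      by move: (disjointFr (x := x) D); rewrite !inE ?e eqxx ?orbT => /(_ isT)
    end
  end.

Ltac split_order :=
  match goal with
  | _ : avoids132 ?p |- _ =>
    match goal with
    | _ : fun_of_perm p ?x = _, _ : fun_of_perm p ?y = _ |- _ =>
      tryif constr_eq x y then fail else
      lazymatch goal with
      | _ : is_true (nat_of_ord x < nat_of_ord y) |- _ => fail
      | _ : is_true (nat_of_ord y < nat_of_ord x) |- _ => fail
      | _ => case: (ltngtP x y) => ?; [ | | close_coincidence]
      end
    end
  end.

Ltac search_132 := saturate_lt; first [find_132 | once split_order; search_132].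

Ltac by_132 :=
  move=> *;
  repeat match goal with
  | C : is_cycle3 _ _ _ _ |- _ => case: C => ? ? [[? [? ?]] | [? [? ?]]]
  end;
  lazymatch goal with
  | |- is_true (?x < ?y) => case: (ltngtP x y) => // ?; exfalso; first [close_coincidence | search_132]
  | |- False => search_132
  end.

Section Cycle3Patterns.
Variables (n : nat) (p : {perm 'I_n}).
Hypothesis avoid : avoids132 p.

Lemma cycle3_lt_max a1 b1 c1 a2 b2 c2 :
  is_cycle3 p a1 b1 c1 -> is_cycle3 p a2 b2 c2 ->
  [disjoint [set a1; b1; c1] & [set a2; b2; c2]] ->
  b1 < b2 -> c1 < c2.
Proof. by_132. Qed.

Lemma cycle3_ascent_lt_max a1 b1 c1 a2 b2 c2 :
  is_cycle3 p a1 b1 c1 -> is_cycle3 p a2 b2 c2 ->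
  [disjoint [set a1; b1; c1] & [set a2; b2; c2]] ->
  b1 < b2 -> a1 < a2 -> b2 < c1.
Proof. by_132. Qed.

Lemma cycle3_ascent_no_max_between a1 b1 c1 a2 b2 c2 a3 b3 c3 :
  is_cycle3 p a1 b1 c1 -> is_cycle3 p a2 b2 c2 -> is_cycle3 p a3 b3 c3 ->
  [disjoint [set a1; b1; c1] & [set a2; b2; c2]] ->
  [disjoint [set a1; b1; c1] & [set a3; b3; c3]] ->
  [disjoint [set a2; b2; c2] & [set a3; b3; c3]] ->
  b1 < b2 -> a1 < a2 -> b1 < c3 -> c3 < b2 -> False.
Proof. by_132. Qed.

Lemma cycle3_ascent_no_mid_between a1 b1 c1 a2 b2 c2 a3 b3 c3 :
  is_cycle3 p a1 b1 c1 -> is_cycle3 p a2 b2 c2 -> is_cycle3 p a3 b3 c3 ->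
  [disjoint [set a1; b1; c1] & [set a2; b2; c2]] ->
  [disjoint [set a1; b1; c1] & [set a3; b3; c3]] ->
  [disjoint [set a2; b2; c2] & [set a3; b3; c3]] ->
  b1 < b2 -> a1 < a2 -> c1 < b3 -> b3 < c2 -> False.
Proof. by_132. Qed.

End Cycle3Patterns.

Section Avoiding132.
Variables (n : nat) (p : {perm 'I_n}).
Hypotheses (avoid : avoids132 p) (p3 : only3cycles p).

Local Notation B := (Bset p).
Local Notation C := (Cset p).
Local Notation alpha := (alpha p).
Local Notation gamma := (gamma p).

Lemma gamma_lt y1 y2 : y1 \in B -> y2 \in B -> y1 < y2 -> gamma y1 < gamma y2.
Proof.
move=> y1B y2B lt12; have [cyc1 _] := Bset_cycle3 p3 y1B; have [cyc2 _] := Bset_cycle3 p3 y2B.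
have neq12 : y1 != y2 by rewrite -val_eqE neq_ltn lt12.
apply: (cycle3_lt_max avoid cyc1 cyc2 _ lt12); exact: Bset_cycles_disjoint.
Qed.

Lemma ltn_gamma y1 y2 : y1 \in B -> y2 \in B -> (gamma y1 < gamma y2) = (y1 < y2).
Proof.
move=> y1B y2B; apply/idP/idP => [|/gamma_lt]; last exact.
apply: contraLR; rewrite -!leqNgt leq_eqVlt => /orP [/eqP/val_inj-> // | lt21].
exact/ltnW/gamma_lt.
Qed.

Lemma leq_gamma y1 y2 : y1 \in B -> y2 \in B -> (gamma y1 <= gamma y2) = (y1 <= y2).
Proof. by move=> y1B y2B; rewrite leqNgt ltn_gamma // -leqNgt. Qed.

Section Ascent.
Variables y1 y2 : 'I_n.
Hypotheses (y1B : y1 \in B) (y2B : y2 \in B) (lt12 : y1 < y2) (asc : alpha y1 < alpha y2).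

Let cyc1 := (Bset_cycle3 p3 y1B).1.
Let cyc2 := (Bset_cycle3 p3 y2B).1.
Let neq12 : y1 != y2. Proof. by rewrite -val_eqE neq_ltn lt12. Qed.

Lemma ascent_lt_gamma : y2 < gamma y1.
Proof. by apply: (cycle3_ascent_lt_max avoid cyc1 cyc2 _ lt12 asc); exact: Bset_cycles_disjoint. Qed.

Lemma ascent_no_Cset_between z : z \in C -> ~~ (y1 < z < y2).
Proof.
rewrite (Cset_gamma p3) => /imsetP [y3 y3B ->]; apply/negP => /andP [lt13 lt32].
have [cyc3 _] := Bset_cycle3 p3 y3B; have [_ lt2 _] := cyc2.
case: (eqVneq y3 y1) => [eq31 | neq31].
  by move: lt32 ascent_lt_gamma; rewrite eq31; lia.
case: (eqVneq y3 y2) => [eq32 | neq32]; first by move: lt32; rewrite eq32; lia.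
apply: (cycle3_ascent_no_max_between avoid cyc1 cyc2 cyc3 _ _ _ lt12 asc lt13 lt32);
  by apply: Bset_cycles_disjoint; rewrite // eq_sym.
Qed.

Lemma ascent_no_Bset_between z : z \in B -> ~~ (gamma y1 < z < gamma y2).
Proof.
move=> zB; apply/negP => /andP [lt1z ltz2].
have [cyc3 _] := Bset_cycle3 p3 zB; have [_ lt1 _] := cyc1.
case: (eqVneq z y1) => [eq_z1 | neq_z1]; first by move: lt1z; rewrite eq_z1; lia.
case: (eqVneq z y2) => [eq_z2 | neq_z2].
  by move: lt1z ascent_lt_gamma; rewrite eq_z2; lia.
apply: (cycle3_ascent_no_mid_between avoid cyc1 cyc2 cyc3 _ _ _ lt12 asc lt1z ltz2);
  by apply: Bset_cycles_disjoint; rewrite // eq_sym.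
Qed.

End Ascent.

Lemma rank_gamma y : y \in B -> rank C (gamma y) = rank B y.
Proof.
move=> yB; have inj : {in [set z in B | z < y] &, injective gamma}.
  by apply: sub_in2 (gamma_inj p3) => z; rewrite inE => /andP [].
rewrite /rank -(card_in_imset inj).
apply: eq_card => z; rewrite inE (Cset_gamma p3).
apply/andP/imsetP => [[/imsetP [y' y'B ->] lt] | [y' /setIdP [y'B lt] ->]].
  by exists y'; rewrite // inE y'B -(ltn_gamma y'B yB).
by rewrite imset_f ?ltn_gamma.
Qed.

Lemma nth_sorted_Cset x0 t : t < #|B| ->
  nth x0 (sorted_elems C) t = gamma (nth x0 (sorted_elems B) t).
Proof.
move=> t_lt; set u := nth x0 (sorted_elems B) t.
have uB : u \in B by exact: mem_nth_sorted_elems.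
rewrite -{1}(rank_nth_sorted_elems x0 t_lt) -/u -rank_gamma //.
exact/nth_rank/gamma_Cset.
Qed.

Lemma linked_ascent y1 y2 t : y1 \in B -> y2 \in B -> y1 < y2 -> alpha y1 < alpha y2 ->
  rank B y1 <= t < rank B y2 -> linked (dyck_word p) t.
Proof.
move=> y1B y2B lt12 asc /andP [le1 lt2].
have ltB : t.+1 < #|B| by exact: leq_ltn_trans lt2 (rank_lt_card y2B).
set u := nth y1 (sorted_elems B) t; set u' := nth y1 (sorted_elems B) t.+1.
have uB : u \in B by exact/mem_nth_sorted_elems/ltnW.
have u'B : u' \in B by exact: mem_nth_sorted_elems.
have le1u : y1 <= u.
  by rewrite leqNgt -(ltn_rank uB y1B) rank_nth_sorted_elems -?leqNgt // ltnW.
have leu'2 : u' <= y2.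
  by rewrite leqNgt -(ltn_rank y2B u'B) rank_nth_sorted_elems -?leqNgt.
apply: (linked_word (x0 := y1) (disjoint_Bset_Cset p3)); rewrite ?card_Cset //.
  move=> z zC; apply: contra (ascent_no_Cset_between y1B y2B lt12 asc zC) => /andP [].
  rewrite -/u -/u'; lia.
move=> z zB; rewrite !nth_sorted_Cset ?(ltnW ltB) // -/u -/u'.
apply: contra (ascent_no_Bset_between y1B y2B lt12 asc zB) => /andP [].
have := leq_gamma y1B uB; have := leq_gamma u'B y2B; rewrite le1u leu'2; lia.
Qed.

Lemma alpha_lt_cut y1 y2 t : y1 \in B -> y2 \in B -> rank B y1 <= t < rank B y2 ->
  ~~ linked (dyck_word p) t -> alpha y2 < alpha y1.
Proof.
move=> y1B y2B t_between unlinked.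
have lt12 : y1 < y2 by rewrite -(ltn_rank y1B y2B); lia.
case: ltngtP => // [asc | /val_inj eq_alpha].
  by rewrite (linked_ascent y1B y2B lt12 asc t_between) in unlinked.
by move: lt12; rewrite (alpha_inj p3 y2B y1B eq_alpha) ltnn.
Qed.

Lemma rank_alpha_lower y e : y \in B -> rank B y < e ->
    (e < #|B| -> ~~ linked (dyck_word p) e.-1) ->
  #|B| - e <= rank (Aset p) (alpha y).
Proof.
move=> yB lt_e cut; have inj : {in [set z in B | e <= rank B z] &, injective alpha}.
  by apply: sub_in2 (alpha_inj p3) => z; rewrite inE => /andP [].
rewrite -card_rank_ge -(card_in_imset inj); apply/subset_leq_card/subsetP.
move=> _ /imsetP [y' /setIdP [y'B le_e] ->]; rewrite inE alpha_Aset //=.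
have lt_card := rank_lt_card y'B.
by apply: (alpha_lt_cut yB y'B _ (cut _)); lia.
Qed.

Lemma rank_alpha_upper y s : y \in B -> s <= rank B y ->
    (0 < s -> ~~ linked (dyck_word p) s.-1) ->
  rank (Aset p) (alpha y) < #|B| - s.
Proof.
move=> yB le_s cut; have inj : {in [set z in B | rank B z < s] &, injective alpha}.
  by apply: sub_in2 (alpha_inj p3) => z; rewrite inE => /andP [].
have lt_card := rank_lt_card yB.
suff : s <= #|[set z in Aset p | alpha y < z]|.
  have := rank_lt_card (alpha_Aset p3 yB).
  by rewrite card_gt_rank ?alpha_Aset // !(card_Aset p3); lia.
have <- : #|[set z in B | rank B z < s]| = s by rewrite card_rank_lt; lia.
rewrite -(card_in_imset inj); apply/subset_leq_card/subsetP.
move=> _ /imsetP [y' /setIdP [y'B lt_s] ->]; rewrite inE alpha_Aset //=.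
by apply: (alpha_lt_cut y'B yB _ (cut _)); lia.
Qed.

Local Notation X := (free_comp (dyck_word p)).

Lemma rank_alpha_block y j : y \in B -> j < size X ->
    sumn (take j X) <= rank B y < sumn (take j.+1 X) ->
  sumn X - sumn (take j.+1 X) <= rank (Aset p) (alpha y) < sumn X - sumn (take j X).
Proof.
move=> yB j_lt /andP [le_s lt_e].
have sumX : sumn X = #|B|.
  rewrite sumn_free_comp semilength_word ?(disjoint_Bset_Cset p3) //.
  by apply/card_gt0P; exists y.
rewrite sumX; apply/andP; split.
  apply: (rank_alpha_lower yB lt_e) => lt_card; apply: free_comp_cut.
  rewrite ltn0Sn ltn_neqAle j_lt andbT; apply: contraTneq lt_card => eq_j.
  by rewrite eq_j take_size sumX ltnn.
apply: (rank_alpha_upper yB le_s) => s_gt0; apply: free_comp_cut.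
by rewrite j_lt andbT lt0n; apply: contraTneq s_gt0 => ->; rewrite take0.
Qed.

End Avoiding132.

Theorem lemma4p3 (m : nat) (p : {perm 'I_(3 * m)}) :
  1 <= m ->
  avoids132 p ->
  only3cycles p ->
  let X := free_comp (dyck_word p) in
  let k := size X in
  forall a b c : 'I_(3 * m),
    a < b -> b < c -> porbit p a = [set a; b; c] ->
    forall j : nat, 1 <= j <= k ->
      b \in block (sorted_elems (Bset p)) X j.-1 ->
      a \in block (sorted_elems (Aset p)) (rev X) (k - j).
Proof.
move=> _ avoid p3 X k a b c ab bc orbit_a j /andP [j_gt0 j_le].
have [bB <-] := porbit_Bset_alpha p3 ab bc orbit_a.
have j_lt : j.-1 < size X by rewrite prednK.
have -> : k - j = size X - j.-1.+1 by rewrite prednK.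
rewrite mem_block_sorted_elems // mem_block_rev_sorted_elems // bB alpha_Aset //=.
exact: rank_alpha_block.
Qed.
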